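(* Let $N\ge1$, $m\ge2$, and consider discrete-time agents $x_i[k+1]=Ax_i[k]+Bu_i[k]$, $y_i[k]=Cx_i[k]$, $i=1,\dots,N$, with $A,B$ the $m$-th order integrator matrices and $C\in\mathbb{R}^{1\times m}$. Apply the protocol $$u_i[k]=K_4z_i[k]-\frac{1}{1+\sum_{j\in\mathcal{N}_i(\sigma[k])}\alpha^{ij}_{\sigma[k]}}\sum_{j\in\mathcal{N}_i(\sigma[k])}\alpha^{ij}_{\sigma[k]}K_5\big(z_i[k]-z_j[k]\big),$$ $$z_i[k+1]=(A+K_6C)z_i[k]+Bu_i[k]-K_6y_i[k],$$ where $K_4=(b_1,\,b_2-b_1,\,\dots,\,b_{m-1}-b_{m-2},\,1-b_{m-1})$, $K_5=(b_1,b_2,\dots,b_{m-1},1)$, $b_1,\dots,b_{m-1}\in\mathbb{R}$, and $K_6\in\mathbb{R}^{m\times1}$. Suppose that $\mathcal{G}_{\sigma[k]}$ is uniformly jointly quasi-strongly connected in the discrete-time sense, every eigenvalue of $A+K_6C$ has modulus strictly less than $1$, and every root of $s^{m-1}+b_{m-1}s^{m-2}+\cdots+b_2s+b_1=0$ has modulus strictly less than $1$. Then for all initial conditions $x_i[0],z_i[0]\in\mathbb{R}^m$ there exists $x^*\in\mathbb{R}^m$ such that $\lim_{k\to\infty}x_i[k]=x^*$ for all $i=1,\dots,N$.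
   Context: $A\in\mathbb{R}^{m\times m}$ has ones on the superdiagonal and zeros elsewhere; $B=(0,\dots,0,1)^T$. Graphs: nodes $v_1,\dots,v_N$; edge $e_{ij}$ from $v_j$ to $v_i$ means agent $i$ receives information from agent $j$; no self-edges; a finite index set $\mathcal{S}$ of digraphs, graph $\mathcal{G}_q$ having fixed weights $\alpha^{ij}_q>0$ on its edges ($0$ otherwise), $\mathcal{N}_i(q)=\{j:e_{ij}\in\mathcal{G}_q\}$; $\sigma:\{0,1,2,\dots\}\to\mathcal{S}$ is the switching sequence. A digraph is quasi-strongly connected if some node has a directed path (sequence of distinct nodes following edge directions) to every other node. $\mathcal{G}_{\sigma[k]}$ is uniformly jointly quasi-strongly connected in the discrete-time sense if there is an integer $M>0$ such that for every $k\ge0$ the graph with edge set $\bigcup_{i=k}^{k+M}\mathcal{E}(\mathcal{G}_{\sigma[i]})$ is quasi-strongly connected. *)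

From Stdlib Require Import Reals List.
Import ListNotations.
Open Scope R_scope.

Fixpoint rsum (n : nat) (f : nat -> R) : R :=
  match n with O => 0 | S n' => rsum n' f + f n' end.

(* Complex numbers as pairs (re, im). *)
Definition Cx : Type := (R * R)%type.
Definition C0 : Cx := (0, 0).
Definition Cofr (r : R) : Cx := (r, 0).
Definition Cadd (z w : Cx) : Cx := (fst z + fst w, snd z + snd w).
Definition Cmul (z w : Cx) : Cx :=
  (fst z * fst w - snd z * snd w, fst z * snd w + snd z * fst w).
Fixpoint Cpow (z : Cx) (n : nat) : Cx :=
  match n with O => (1, 0) | S n' => Cmul z (Cpow z n') end.
Fixpoint Csum (n : nat) (f : nat -> Cx) : Cx :=
  match n with O => C0 | S n' => Cadd (Csum n' f) (f n') end.
Definition Cmod (z : Cx) : R := sqrt (fst z ^ 2 + snd z ^ 2).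

(* Vectors in R^m: nat -> R (indices 0..m-1); matrices: nat -> nat -> R. *)
Definition dot (m : nat) (u v : nat -> R) : R := rsum m (fun p => u p * v p).
Definition mv (m : nat) (M : nat -> nat -> R) (v : nat -> R) (p : nat) : R :=
  rsum m (fun q => M p q * v q).

Definition is_eigenvalue (m : nat) (M : nat -> nat -> R) (lam : Cx) : Prop :=
  exists v : nat -> Cx,
    (exists p, (p < m)%nat /\ v p <> C0) /\
    forall p, (p < m)%nat ->
      Csum m (fun q => Cmul (Cofr (M p q)) (v q)) = Cmul lam (v p).

(* m-th order integrator: ones on the superdiagonal; B = e_m *)
Definition Aint (p q : nat) : R := if Nat.eqb q (S p) then 1 else 0.
Definition Bint (m p : nat) : R := if Nat.eqb p (m - 1) then 1 else 0.

(* Gains, with b : nat -> R and b 1, ..., b (m-1) the parameters b_1..b_{m-1}.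
   K4 = (b1, b2-b1, ..., b_{m-1}-b_{m-2}, 1-b_{m-1}),  K5 = (b1,...,b_{m-1},1). *)
Definition K5 (m : nat) (b : nat -> R) (p : nat) : R :=
  if Nat.eqb p (m - 1) then 1 else b (S p).
Definition K4 (m : nat) (b : nat -> R) (p : nat) : R :=
  K5 m b p - (if Nat.eqb p 0 then 0 else b p).

Definition bpoly (m : nat) (b : nat -> R) (s : Cx) : Cx :=
  Cadd (Cpow s (m - 1)) (Csum (m - 1) (fun i => Cmul (Cofr (b (S i))) (Cpow s i))).

(* Graphs: alpha q i j is the weight of edge e_ij (from v_j to v_i) in G_q,
   > 0 iff the edge is present, 0 otherwise.  Nodes are 0..N-1. *)
Fixpoint is_walk (E : nat -> nat -> Prop) (l : list nat) : Prop :=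
  match l with
  | x :: ((y :: _) as t) => E x y /\ is_walk E t
  | _ => True
  end.

(* directed path (sequence of distinct nodes) from a to b, E x y = edge from x to y *)
Definition dpath (N : nat) (E : nat -> nat -> Prop) (a b : nat) : Prop :=
  exists l : list nat,
    NoDup (a :: l) /\ Forall (fun v => (v < N)%nat) (a :: l) /\
    is_walk E (a :: l) /\ last (a :: l) a = b.

Definition quasi_strongly_connected (N : nat) (E : nat -> nat -> Prop) : Prop :=
  exists r, (r < N)%nat /\ forall t, (t < N)%nat -> t <> r -> dpath N E r t.

(* edge from v_j to v_i in the union of G_{sigma[l]}, l = k..k+M *)
Definition union_edge (alpha : nat -> nat -> nat -> R) (sigma : nat -> nat)
    (k M : nat) (j i : nat) : Prop :=
  exists l, (k <= l <= k + M)%nat /\ alpha (sigma l) i j > 0.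

Definition UJQSC (N : nat) (alpha : nat -> nat -> nat -> R) (sigma : nat -> nat) : Prop :=
  exists M : nat, (M > 0)%nat /\
    forall k : nat, quasi_strongly_connected N (union_edge alpha sigma k M).

From Stdlib Require Import Reals List Lra Lia.
From HB Require Import structures.
From mathcomp Require Import all_boot all_order all_algebra.
From mathcomp Require Import boolp Rstruct complex.
From mathcomp Require Import ring lra zify.
Import Order.TTheory GRing.Theory Num.Theory.

(* With the observer error e_i = z_i - x_i and the output xi_i = K5 x_i:
   1. e_i[k+1] = (A + K6 C) e_i[k]; by Cayley-Hamilton each coordinate of e_i obeys
      a scalar recurrence with characteristic roots in the open unit disk, hence
      is absolutely summable (stable_recurrence_summable).
   2. As K5 A = (0, b_1, ..., b_{m-1}) and K5 B = 1, xi_i follows weighted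
      averaging up to an error O(|e|) (xi_perturbed).  Under uniformly jointly
      quasi-strongly connected graphs two agents share a common influencer within
      (N - 1)(M + 1) steps (scramble), so the spread max - min contracts and
      perturbed averaging with summable errors reaches consensus (consensus).
   3. Along the integrator chain x_{i,p}[k] = x_{i,0}[k + p], so xi_i is x_{i,0}
      filtered by s^{m-1} + b_{m-1} s^{m-2} + ... + b_1; this stable filter is
      inverted one root at a time (pfilter_cvg, closed_loop_consensus). *)
Set Implicit Arguments.
Unset Strict Implicit.
Local Open Scope ring_scope.

Ltac to_ring :=
  rewrite ?RplusE ?RminusE ?RmultE ?RoppE ?RdivE ?RinvE ?R0E ?R1E ?IZRposE ?INRE /=.

Notation C := (complex R).

Definition cabs (z : C) : R := @Normc.normc R z.

Lemma cabs_ge0 z : 0 <= cabs z.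
Proof. by case: z => a b; rewrite /cabs /Normc.normc sqrtr_ge0. Qed.

Lemma cabsD z w : cabs (z + w) <= cabs z + cabs w.
Proof. exact: le_normcD. Qed.

Lemma cabsM z w : cabs (z * w) = cabs z * cabs w.
Proof. exact: Normc.normcM. Qed.

Lemma cabsV z : cabs (z^-1) = (cabs z)^-1.
Proof. exact: Normc.normcV. Qed.

Lemma cabs1 : cabs 1 = 1.
Proof. exact: Normc.normc1. Qed.

Lemma cabs_gt0 z : z != 0 -> 0 < cabs z.
Proof.
move=> z0; rewrite lt_def cabs_ge0 andbT.
by apply: contra z0 => /eqP /Normc.eq0_normc ->.
Qed.

Lemma cabs_real (x : R) : cabs (x%:C)%C = `|x|.
Proof. by rewrite /cabs /Normc.normc /= expr0n /= addr0 sqrtr_sqr. Qed.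

Lemma cabs_Re z : `|complex.Re z| <= cabs z.
Proof.
case: z => a b; rewrite /cabs /Normc.normc /=.
by rewrite -sqrtr_sqr ler_sqrt ?addr_ge0 ?sqr_ge0 // lerDl sqr_ge0.
Qed.

Lemma Re_realB (x : R) (c : C) : complex.Re ((x%:C)%C - c) = x - complex.Re c.
Proof. by case: c. Qed.

Lemma subr1_neq0 r : cabs r < 1 -> 1 - r != 0.
Proof. by apply: contraTneq => /eqP; rewrite subr_eq0 => /eqP <-; rewrite cabs1 ltxx. Qed.

Definition abs_summable (y : nat -> C) :=
  exists B : R, forall n, \sum_(k < n) cabs (y k) <= B.

Definition ccvg (y : nat -> C) (c : C) :=
  forall eps : R, 0 < eps -> exists K, forall k, (K <= k)%N -> cabs (y k - c) < eps.

Lemma geometric_small (q A eps : R) : 0 <= q -> q < 1 -> 0 <= A -> 0 < eps ->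
  exists J, forall j, (J <= j)%N -> q ^+ j * A < eps.
Proof.
move=> q0 q1 A0 e0.
have hq : Rlt (Rabs q) 1 by apply/RltP; rewrite RabsE ger0_norm ?R1E.
have he : Rlt 0 (eps / (A + 1)) by apply/RltP; to_ring; rewrite divr_gt0 //; lra.
have [J HJ] := pow_lt_1_zero q hq _ he.
exists J => j /ssrnat.leP Hj; have := HJ j Hj.
rewrite RabsE RpowE => /RltP; rewrite ger0_norm ?exprn_ge0 // => h.
have h' : q ^+ j * (A + 1) < eps by rewrite -ltr_pdivlMr //; lra.
have : q ^+ j * A <= q ^+ j * (A + 1) by rewrite ler_wpM2l ?exprn_ge0 //; lra.
lra.
Qed.

Lemma first_order_summable (r : C) (v w : nat -> C) : cabs r < 1 ->
  (forall k, w k.+1 = r * w k + v k) -> abs_summable v -> abs_summable w.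
Proof.
move=> hr hw [B hB].
have partial n : \sum_(k < n.+1) cabs (w k) <=
    cabs (w 0%N) + cabs r * \sum_(k < n) cabs (w k) + \sum_(k < n) cabs (v k).
  elim: n => [|n IH]; first by rewrite big_ord1 !big_ord0 mulr0 !addr0.
  rewrite big_ord_recr /= [X in _ <= _ + _ * X + _]big_ord_recr /=.
  rewrite [X in _ <= _ + X]big_ord_recr /= hw.
  apply: (le_trans (lerD IH (cabsD _ _))); rewrite cabsM mulrDr; lra.
exists ((cabs (w 0%N) + B) / (1 - cabs r)) => n.
have mono : \sum_(k < n) cabs (w k) <= \sum_(k < n.+1) cabs (w k).
  by rewrite big_ord_recr /= lerDl cabs_ge0.
have := partial n; have := hB n; have := cabs_ge0 r.
rewrite ler_pdivlMr ?subr_gt0 //.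
set S := \sum_(k < n) cabs (w k) in mono *; set V := \sum_(k < n) cabs (v k).
move=> r0 hV hS; have : S <= cabs (w 0%N) + cabs r * S + B by lra.
by rewrite mulrBr mulr1; lra.
Qed.

Lemma first_order_cvg (r : C) (v w : nat -> C) (c : C) : cabs r < 1 ->
  (forall k, w k.+1 = r * w k + v k) -> ccvg v c -> ccvg w (c / (1 - r)).
Proof.
move=> hr hw hv eps e0.
set a := c / (1 - r).
have fixpt : a = r * a + c by rewrite /a; field; apply: subr1_neq0.
have q0 := cabs_ge0 r.
have e1 : 0 < eps * (1 - cabs r) / 2 by rewrite divr_gt0 // mulr_gt0 // subr_gt0.
have [K HK] := hv _ e1.
have tail j : cabs (w (K + j)%N - a) <= cabs r ^+ j * cabs (w K - a) + eps / 2.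
  elim: j => [|j IH]; first by rewrite addn0 expr0 mul1r lerDl; lra.
  rewrite addnS hw.
  have -> : r * w (K + j)%N + v (K + j)%N - a =
            r * (w (K + j)%N - a) + (v (K + j)%N - c) by rewrite {1}fixpt; ring.
  apply: (le_trans (cabsD _ _)); rewrite cabsM exprS -mulrA.
  have := HK (K + j)%N (leq_addr _ _).
  have : cabs r * cabs (w (K + j)%N - a) <=
         cabs r * (cabs r ^+ j * cabs (w K - a) + eps / 2) by apply: ler_wpM2l.
  have : cabs r * (eps / 2) + eps * (1 - cabs r) / 2 = eps / 2 by ring.
  lra.
have e2 : 0 < eps / 2 by rewrite divr_gt0.
have [J HJ] := geometric_small q0 hr (cabs_ge0 (w K - a)) e2.
exists (K + J)%N => k hk.
have hKk : (K <= k)%N := leq_trans (leq_addr _ _) hk.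
rewrite -(subnKC hKk); apply: (le_lt_trans (tail _)).
have : cabs r ^+ (k - K) * cabs (w K - a) < eps / 2 by apply: HJ; rewrite leq_subRL.
lra.
Qed.

(* The moving-sum filter of a polynomial P: (pfilter P y) k = sum_j P_j y_{k+j}.
   A linear recurrence of characteristic polynomial P says pfilter P y = 0. *)
Definition pfilter (P : {poly C}) (y : nat -> C) (k : nat) : C :=
  \sum_(j < size P) P`_j * y (k + j)%N.

Lemma pfilter_XsubC (Q : {poly C}) r y k : Q != 0 ->
  pfilter (Q * ('X - r%:P)) y k = pfilter Q y k.+1 - r * pfilter Q y k.
Proof.
move=> Q0.
have hs : size (Q * ('X - r%:P)) = (size Q).+1.
  by rewrite size_mul ?polyXsubC_eq0 // size_XsubC addn2.
rewrite /pfilter hs (eq_bigr (fun j : 'I_(size Q).+1 =>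
  (Q * 'X)`_j * y (k + j)%N - Q`_j * r * y (k + j)%N)); last first.
  by move=> j _; rewrite mulrBr coefB coefMC mulrBl.
rewrite sumrB big_ord_recl /= coefMX eqxx mul0r add0r.
rewrite [X in _ - X = _]big_ord_recr /= nth_default // mul0r mul0r addr0.
rewrite mulr_sumr; congr (_ - _).
  by apply: eq_bigr => j _; rewrite coefMX /= /bump /= add1n addnS.
by apply: eq_bigr => j _; rewrite mulrCA mulrA.
Qed.

Lemma pfilter_const (P : {poly C}) y k : size P = 1%N ->
  P`_0 != 0 /\ pfilter P y k = P`_0 * y k.
Proof.
move=> h; rewrite /pfilter h big_ord1 addn0; split => //.
have : lead_coef P != 0 by rewrite lead_coef_eq0 -size_poly_eq0 h.
by rewrite /lead_coef h.
Qed.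

Lemma split_root (P : {poly C}) n : size P = n.+2 ->
  exists r (Q : {poly C}), [/\ root P r, P = Q * ('X - r%:P), Q != 0 & size Q = n.+1].
Proof.
move=> hs; have : size P != 1%N by rewrite hs.
case/closed_rootP => r hr; exists r, (P %/ ('X - r%:P)).
have hP : P = (P %/ ('X - r%:P)) * ('X - r%:P) by rewrite divpK // dvdp_XsubCl.
have Q0 : P %/ ('X - r%:P) != 0.
  by apply: contra_eq_neq hP => ->; rewrite mul0r -size_poly_eq0 hs.
split => //; move: hs; rewrite {1}hP size_mul ?polyXsubC_eq0 //.
by rewrite size_XsubC addn2 => -[].
Qed.

Lemma pfilter_summable n (P : {poly C}) (y : nat -> C) : size P = n.+1 ->
  (forall z, root P z -> cabs z < 1) -> abs_summable (pfilter P y) -> abs_summable y.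
Proof.
elim: n P => [|n IH] P hs hroots hsum.
  have [c0 _] := pfilter_const y 0 hs.
  case: hsum => B hB; exists (cabs (P`_0)^-1 * B) => n.
  have -> : \sum_(k < n) cabs (y k) = cabs (P`_0)^-1 * \sum_(k < n) cabs (pfilter P y k).
    rewrite mulr_sumr; apply: eq_bigr => k _.
    by have [_ ->] := pfilter_const y k hs; rewrite -cabsM mulrA mulVf // mul1r.
  by rewrite ler_wpM2l // cabs_ge0.
have [r [Q [hr hP Q0 hsQ]]] := split_root hs.
apply: (IH Q) => // [z hz|]; first by apply: hroots; rewrite hP rootM hz.
apply: (@first_order_summable r (pfilter P y)); first exact: hroots.
  by move=> k; rewrite hP pfilter_XsubC //; ring.
exact: hsum.
Qed.

Lemma pfilter_cvg n (P : {poly C}) (y : nat -> C) (c : C) : size P = n.+1 ->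
  (forall z, root P z -> cabs z < 1) -> ccvg (pfilter P y) c -> ccvg y (c / P.[1]).
Proof.
elim: n P c => [|n IH] P c hs hroots hcv.
  have [c0 _] := pfilter_const y 0 hs.
  have hP : P = (P`_0)%:P by apply: size1_polyC; rewrite hs.
  rewrite [P in P.[1]]hP hornerC => eps e0.
  have np := cabs_gt0 c0.
  have [K HK] := hcv _ (mulr_gt0 e0 np); exists K => k hk.
  have -> : y k - c / P`_0 = (P`_0)^-1 * (pfilter P y k - c).
    by have [_ ->] := pfilter_const y k hs; field.
  by rewrite cabsM cabsV mulrC ltr_pdivrMr // HK.
have [r [Q [hr hP Q0 hsQ]]] := split_root hs.
have r1 : cabs r < 1 by apply: hroots.
have hQ1 : Q.[1] != 0.
  apply: contraTneq isT => h; have : root P 1 by rewrite hP rootM /root h eqxx.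
  by move/hroots; rewrite cabs1 ltxx.
have -> : c / P.[1] = (c / (1 - r)) / Q.[1].
  by rewrite hP hornerM hornerXsubC; field; rewrite hQ1 subr1_neq0.
apply: (IH Q) => // [z hz|]; first by apply: hroots; rewrite hP rootM hz.
apply: (@first_order_cvg r (pfilter P y)) => // k.
by rewrite hP pfilter_XsubC //; ring.
Qed.

Lemma rsumE n (f : nat -> R) : rsum n f = \sum_(i < n) f i.
Proof. by elim: n => [|n IH]; rewrite ?big_ord0 //= big_ord_recr /= -IH. Qed.

Definition toC (z : Cx) : C := complex.Complex z.1 z.2.
Definition fromC (c : C) : Cx := (complex.Re c, complex.Im c).

Lemma toCK c : toC (fromC c) = c. Proof. by case: c. Qed.

Lemma toC_inj z w : toC z = toC w -> z = w.
Proof. by case: z => a b; case: w => c d /= [-> ->]. Qed.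

Lemma toC_add z w : toC (Cadd z w) = toC z + toC w. Proof. by []. Qed.

Lemma toC_mul z w : toC (Cmul z w) = toC z * toC w. Proof. by []. Qed.

Lemma toC_pow z n : toC (Cpow z n) = toC z ^+ n.
Proof. by elim: n => [|n IH] //=; rewrite toC_mul IH exprS. Qed.

Lemma toC_sum n f : toC (Csum n f) = \sum_(i < n) toC (f i).
Proof. by elim: n => [|n IH]; rewrite ?big_ord0 //= big_ord_recr -IH. Qed.

Lemma Cmod_cabs z : Cmod z = cabs (toC z).
Proof. by case: z => a b; rewrite /Cmod RsqrtE !RpowE. Qed.

Definition cmx m' (M : nat -> nat -> R) : 'M[C]_m'.+1 := \matrix_(i, j) ((M i j)%:C)%C.

Lemma horner_mx_sum m' (A : 'M[C]_m'.+1) (p : {poly C}) :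
  horner_mx A p = \sum_(j < size p) p`_j *: A ^+ j.
Proof.
rewrite -[p in LHS]coefK poly_def rmorph_sum; apply: eq_bigr => j _.
rewrite -mul_polyC rmorphM /= horner_mx_C rmorphXn /= horner_mx_X; exact: mul_scalar_mx.
Qed.

Lemma cayley_hamilton_recurrence m' (M : nat -> nat -> R) (e : nat -> nat -> R) :
  (forall k p, (p < m'.+1)%N -> e k.+1 p = rsum m'.+1 (fun q => M p q * e k q)) ->
  forall p k, (p < m'.+1)%N -> pfilter (char_poly (cmx m' M)) (fun k => ((e k p)%:C)%C) k = 0.
Proof.
move=> he p k hp.
pose E k : 'cV[C]_m'.+1 := \col_(i < m'.+1) ((e k i)%:C)%C.
have hE l : E l.+1 = cmx m' M *m E l.
  apply/matrixP => i j; rewrite !mxE he // rsumE rmorph_sum.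
  by apply: eq_bigr => q _; rewrite !mxE rmorphM.
have hEj j : E (k + j)%N = cmx m' M ^+ j *m E k.
  elim: j => [|j IH]; first by rewrite addn0 expr0 mul1mx.
  by rewrite addnS hE IH exprS mulmxA.
have := Cayley_Hamilton (cmx m' M); rewrite horner_mx_sum => hCH.
have : ((\sum_(j < size (char_poly (cmx m' M)))
          (char_poly (cmx m' M))`_j *: cmx m' M ^+ j) *m E k) (Ordinal hp) 0 = 0.
  by rewrite hCH mul0mx mxE.
rewrite mulmx_suml summxE => <-; apply: eq_bigr => j _.
by rewrite -scalemxAl -hEj !mxE.
Qed.

Lemma char_poly_tr n (A : 'M[C]_n) : char_poly A^T = char_poly A.
Proof.
rewrite /char_poly -det_tr; congr (\det _); apply/matrixP => i j.
by rewrite !mxE eq_sym.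
Qed.

Lemma root_char_poly_eigenvalue m' (M : nat -> nat -> R) a :
  root (char_poly (cmx m' M)) a -> is_eigenvalue m'.+1 M (fromC a).
Proof.
rewrite -char_poly_tr -eigenvalue_root_char => /eigenvalueP [v hv v0].
exists (fun q => fromC (v 0 (inord q))); split.
  have [j hj] : exists j, v 0 j != 0.
    apply/existsP; apply: contraNT v0 => /existsPn h; apply/eqP/matrixP => i j.
    by rewrite (ord1 i) mxE; move: (h j); rewrite negbK => /eqP.
  exists j; split; first exact/ssrnat.ltP.
  by move/(congr1 toC); rewrite toCK inord_val; apply/eqP.
move=> p /ssrnat.ltP hp; apply: toC_inj.
rewrite toC_sum toC_mul !toCK.
have := congr1 (fun M : 'rV[C]_m'.+1 => M 0 (inord p)) hv; rewrite /= !mxE => <-.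
apply: eq_bigr => q _; rewrite toC_mul toCK inord_val !mxE mulrC.
by rewrite inordK.
Qed.

Lemma stable_recurrence_summable m' (M : nat -> nat -> R) (e : nat -> nat -> R) :
  (forall lam, is_eigenvalue m'.+1 M lam -> Cmod lam < 1) ->
  (forall k p, (p < m'.+1)%N -> e k.+1 p = rsum m'.+1 (fun q => M p q * e k q)) ->
  forall p, (p < m'.+1)%N -> exists B, forall K, \sum_(k < K) `|e k p| <= B.
Proof.
move=> hstab he p hp.
have hroots w : root (char_poly (cmx m' M)) w -> cabs w < 1.
  move=> hw; have := hstab _ (root_char_poly_eigenvalue hw).
  by rewrite Cmod_cabs toCK.
have h0 : abs_summable (pfilter (char_poly (cmx m' M)) (fun k => ((e k p)%:C)%C)).
  exists 0 => K; rewrite big1 // => k _.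
  by rewrite cayley_hamilton_recurrence // /cabs Normc.normc0.
have [B hB] := pfilter_summable (size_char_poly _) hroots h0.
by exists B => K; have := hB K; under eq_bigr do rewrite cabs_real.
Qed.

Definition wsum (N : nat) (a : nat -> nat -> nat -> R) k i : R := \sum_(j < N) a k i j.

Definition wavg (N : nat) (a : nat -> nat -> nat -> R) (xi : nat -> nat -> R) k i :=
  (xi i k + \sum_(j < N) a k i j * xi j k) / (1 + wsum N a k i).

(* dl is a uniform lower bound on all normalized weights that are nonzero. *)
Definition weights_bounded (N : nat) (a : nat -> nat -> nat -> R) (dl : R) :=
  [/\ 0 < dl, dl <= 1,
      (forall k i, (i < N)%N -> dl * (1 + wsum N a k i) <= 1) &
      (forall k i j, (i < N)%N -> (j < N)%N -> 0 < a k i j ->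
         dl * (1 + wsum N a k i) <= a k i j)].

Definition perturbed_avg (N : nat) a (xi : nat -> nat -> R) (dd : nat -> R) :=
  forall k i, (i < N)%N -> `|xi i k.+1 - wavg N a xi k i| <= dd k.

Definition psum (dd : nat -> R) k : R := \sum_(l < k) dd l.

Lemma psumS dd k : psum dd k.+1 = psum dd k + dd k.
Proof. by rewrite /psum big_ord_recr. Qed.

Lemma psum_mono dd k d : (forall k, 0 <= dd k) -> psum dd k <= psum dd (k + d)%N.
Proof.
move=> h; elim: d => [|d IH]; first by rewrite addn0.
by rewrite addnS psumS; have := h (k + d)%N; lra.
Qed.

(* Negating all states negates the averages; this turns upper bounds into lower
   bounds. *)
Lemma wavg_opp N a xi k i : wavg N a (fun i k => - xi i k) k i = - wavg N a xi k i.
Proof.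
rewrite /wavg -mulNr opprD -sumrN; congr ((_ + _) * _).
by apply: eq_bigr => j _; rewrite mulrN.
Qed.

Lemma perturbed_avg_opp N a xi dd :
  perturbed_avg N a xi dd -> perturbed_avg N a (fun i k => - xi i k) dd.
Proof. by move=> h k i hi; rewrite wavg_opp -opprD normrN; apply: h. Qed.

Section Averaging.
Variables (N : nat) (a : nat -> nat -> nat -> R) (dl : R).
Hypothesis a_ge0 : forall k i j, 0 <= a k i j.
Hypothesis a_bounded : weights_bounded N a dl.

Lemma wsum_ge0 k i : 0 <= wsum N a k i.
Proof. by apply: sumr_ge0 => j _. Qed.

Lemma wavg_ub xi k i U : (forall j, (j < N)%N -> xi j k <= U) -> (i < N)%N ->
  wavg N a xi k i <= U.
Proof.
move=> hU hi; have s0 := wsum_ge0 k i.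
rewrite /wavg ler_pdivrMr; last lra.
have : \sum_(j < N) a k i j * xi j k <= \sum_(j < N) a k i j * U.
  by apply: ler_sum => j _; apply: ler_wpM2l => //; apply: hU.
rewrite -mulr_suml -/(wsum N a k i); have := hU i hi; lra.
Qed.

Lemma wavg_gap xi k i U j0 :
  (forall j, (j < N)%N -> xi j k <= U) -> (i < N)%N -> (j0 < N)%N ->
  (j0 = i \/ 0 < a k i j0) -> dl * (U - xi j0 k) <= U - wavg N a xi k i.
Proof.
case: a_bounded => dl0 dl1 h1 h2 hU hi hj0 hj.
have s0 := wsum_ge0 k i; set s := wsum N a k i in s0 h1 h2 *.
have gap_ge0 j : (j < N)%N -> 0 <= U - xi j k by move=> hj'; have := hU j hj'; lra.
have eT : \sum_(j < N) a k i j * (U - xi j k) = U * s - \sum_(j < N) a k i j * xi j k.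
  by rewrite /s /wsum mulr_sumr -sumrB; apply: eq_bigr => j _; ring.
have num : dl * (1 + s) * (U - xi j0 k) <=
           (U - xi i k) + \sum_(j < N) a k i j * (U - xi j k).
  have hT : 0 <= \sum_(j < N) a k i j * (U - xi j k).
    by apply: sumr_ge0 => j _; apply: mulr_ge0 => //; apply: gap_ge0.
  case: hj => [->|hpos].
    have : dl * (1 + s) * (U - xi i k) <= 1 * (U - xi i k).
      by apply: ler_wpM2r; [apply: gap_ge0 | apply: h1].
    lra.
  have single : a k i j0 * (U - xi j0 k) <= \sum_(j < N) a k i j * (U - xi j k).
    rewrite (bigD1 (Ordinal hj0)) //= lerDl; apply: sumr_ge0 => j _.
    by apply: mulr_ge0 => //; apply: gap_ge0.
  have : dl * (1 + s) * (U - xi j0 k) <= a k i j0 * (U - xi j0 k).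
    by apply: ler_wpM2r; [apply: gap_ge0 | apply: h2].
  have := gap_ge0 i hi; lra.
have -> : U - wavg N a xi k i =
          ((U - xi i k) + \sum_(j < N) a k i j * (U - xi j k)) / (1 + s).
  by rewrite /wavg -/s eT; field; lra.
by rewrite ler_pdivlMr; [rewrite mulrAC | lra].
Qed.

Lemma bounds_up xi dd k0 U : perturbed_avg N a xi dd ->
  (forall j, (j < N)%N -> xi j k0 <= U) ->
  forall d j, (j < N)%N -> xi j (k0 + d)%N <= U + (psum dd (k0 + d)%N - psum dd k0).
Proof.
move=> hs hU; elim=> [|d IH] j hj; first by rewrite addn0 subrr addr0; apply: hU.
rewrite addnS psumS.
have := hs (k0 + d)%N j hj => /ler_normlP [_ h].
have := wavg_ub IH hj; lra.
Qed.

Lemma bounds_lo xi dd k0 L : perturbed_avg N a xi dd ->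
  (forall j, (j < N)%N -> L <= xi j k0) ->
  forall d j, (j < N)%N -> L - (psum dd (k0 + d)%N - psum dd k0) <= xi j (k0 + d)%N.
Proof.
move=> hs hL d j hj.
have hU j' : (j' < N)%N -> - xi j' k0 <= - L by move=> hj'; rewrite lerN2; apply: hL.
have := bounds_up (perturbed_avg_opp hs) hU d hj; lra.
Qed.

Inductive influence (k0 c : nat) : nat -> nat -> Prop :=
| influence0 : (c < N)%N -> influence k0 c k0 c
| influenceS k j i : influence k0 c k j -> (i < N)%N -> (j = i \/ 0 < a k i j) ->
    influence k0 c k.+1 i.

Lemma influence_le k0 c k i : influence k0 c k i -> (k0 <= k)%N.
Proof. by elim=> // k' j i' _ IH _ _; apply: leqW. Qed.

Lemma influence_lt k0 c k i : influence k0 c k i -> (i < N)%N.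
Proof. by case. Qed.

Lemma influence_stay k0 c d : (c < N)%N -> influence k0 c (k0 + d)%N c.
Proof.
move=> hc; elim: d => [|d IH]; first by rewrite addn0; constructor.
by rewrite addnS; apply: (influenceS IH) => //; left.
Qed.

Lemma influence_trans k0 c k1 j k2 i :
  influence k0 c k1 j -> influence k1 j k2 i -> influence k0 c k2 i.
Proof. by move=> h1; elim=> // k j' i' _ IH hi hj; apply: (influenceS IH). Qed.

Lemma influence_bound xi dd k0 c k i U : perturbed_avg N a xi dd ->
  (forall j, (j < N)%N -> xi j k0 <= U) -> influence k0 c k i ->
  dl ^+ (k - k0) * (U - xi c k0) <= U + (psum dd k - psum dd k0) - xi i k.
Proof.
move=> hs hU; elim=> [hc|k' j i' h IH hi hj].
  by rewrite subnn expr0 mul1r subrr addr0.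
have hk := influence_le h.
have hall j' : (j' < N)%N -> xi j' k' <= U + (psum dd k' - psum dd k0).
  by move=> hj'; have := bounds_up hs hU (k' - k0) hj'; rewrite subnKC.
have hg := wavg_gap hall hi (influence_lt h) hj.
have := hs k' i' hi => /ler_normlP [_ hst].
rewrite subSn // exprS psumS.
case: a_bounded => dl0 _ _ _.
have : dl * (dl ^+ (k' - k0) * (U - xi c k0)) <=
       dl * (U + (psum dd k' - psum dd k0) - xi j k') by apply: ler_wpM2l => //; lra.
rewrite mulrA; lra.
Qed.

Lemma influence_bound_lo xi dd k0 c k i L : perturbed_avg N a xi dd ->
  (forall j, (j < N)%N -> L <= xi j k0) -> influence k0 c k i ->
  dl ^+ (k - k0) * (xi c k0 - L) <= xi i k - (L - (psum dd k - psum dd k0)).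
Proof.
move=> hs hL hi.
have hU j : (j < N)%N -> - xi j k0 <= - L by move=> hj; rewrite lerN2; apply: hL.
have := influence_bound (perturbed_avg_opp hs) hU hi.
have -> : - L - - xi c k0 = xi c k0 - L by ring.
lra.
Qed.

End Averaging.

Definition nbhd N (E : nat -> nat -> Prop) (T : {set 'I_N}) : {set 'I_N} :=
  [set x : 'I_N | `[< exists y : 'I_N, y \in T /\ (x = y \/ E (x : nat) (y : nat)) >]].

Lemma nbhd_sub N E (T : {set 'I_N}) : T \subset nbhd E T.
Proof. by apply/subsetP => x hx; rewrite inE; apply/asboolP; exists x; split => //; left. Qed.

Lemma last_default (l : list nat) b d d' : List.last (b :: l) d = List.last (b :: l) d'.
Proof. by elim: l b => [|c l IH] b //=; apply: IH. Qed.

Lemma walk_back N (E : nat -> nat -> Prop) (P : nat -> Prop) :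
  (forall x y, (x < N)%coq_nat -> (y < N)%coq_nat -> E x y -> P y -> P x) ->
  forall l a, List.Forall (fun v => (v < N)%coq_nat) (a :: l) -> is_walk E (a :: l) ->
  P (List.last (a :: l) a) -> P a.
Proof.
move=> hcl; elim=> [|b l IH] a hF hW hP //.
have [hEab hW'] : E a b /\ is_walk E (b :: l) by exact: hW.
inversion hF as [|? ? ha hF']; subst; inversion hF' as [|? ? hb _]; subst.
apply: (hcl a b ha hb hEab); apply: IH => //.
by rewrite (last_default l b b a).
Qed.

Lemma qsc_root N E : quasi_strongly_connected N E ->
  exists r : 'I_N, forall S : {set 'I_N}, S != set0 -> nbhd E S = S -> r \in S.
Proof.
case=> r [/ssrnat.ltP hr hpath]; exists (Ordinal hr) => S /set0Pn [s hs] hS.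
pose P v := exists o : 'I_N, (o : nat) = v /\ o \in S.
suff : P r by case=> o [ho hoS]; have -> : Ordinal hr = o by apply: val_inj.
have hcl x y : (x < N)%coq_nat -> (y < N)%coq_nat -> E x y -> P y -> P x.
  move=> /ssrnat.ltP hx _ hE [o [ho hoS]]; exists (Ordinal hx); split => //.
  by rewrite -hS inE; apply/asboolP; exists o; split => //; right; rewrite ho.
case: (PeanoNat.Nat.eq_dec s r) => [<-|hne]; first by exists s.
have [l [_ [hF [hW hl]]]] := hpath s (ssrnat.ltP (ltn_ord s)) hne.
by apply: (walk_back hcl hF hW); rewrite hl; exists s.
Qed.

(* If two nonempty disjoint sets stay disjoint after adding their in-neighbours,
   their union strictly grows: otherwise both sets would be closed under adding
   in-neighbours and would share the root. *)
Lemma nbhd_grow N E (S S' : {set 'I_N}) : quasi_strongly_connected N E ->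
  S != set0 -> S' != set0 -> S :&: S' = set0 -> nbhd E S :&: nbhd E S' = set0 ->
  (#|S :|: S'| < #|nbhd E S :|: nbhd E S'|)%N.
Proof.
move=> hq hS hS' hd hdN; rewrite ltnNge; apply/negP.
rewrite !cardsU hd hdN !cards0 !subn0 => hle.
have c1 := subset_leq_card (nbhd_sub E S); have c2 := subset_leq_card (nbhd_sub E S').
have e1 : nbhd E S = S.
  apply/eqP; rewrite eq_sym eqEcard nbhd_sub /=.
  by rewrite -(leq_add2r #|nbhd E S'|); apply: (leq_trans hle); rewrite leq_add2l.
have e2 : nbhd E S' = S'.
  apply/eqP; rewrite eq_sym eqEcard nbhd_sub /=.
  by rewrite -(leq_add2l #|nbhd E S|); apply: (leq_trans hle); rewrite leq_add2r.
have [r hr] := qsc_root hq.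
have : r \in S :&: S' by rewrite inE hr ?hr.
by rewrite hd inE.
Qed.

Lemma meet_mono N (X X' Y Y' : {set 'I_N}) : X \subset X' -> Y \subset Y' ->
  X :&: Y != set0 -> X' :&: Y' != set0.
Proof.
move=> hX hY /set0Pn [c]; rewrite inE => /andP [h1 h2].
by apply/set0Pn; exists c; rewrite inE (subsetP hX _ h1) (subsetP hY _ h2).
Qed.

Lemma window_influence N a M k x y : union_edge a id k M x y ->
  (x < N)%N -> (y < N)%N -> influence N a k x (k + M.+1)%N y.
Proof.
move=> [l [[/ssrnat.leP h1 /ssrnat.leP h2] /RltP hpos]] hx hy.
have s1 : influence N a k x l x by have := influence_stay a k (l - k) hx; rewrite subnKC.
have s2 : influence N a k x l.+1 y by apply: (influenceS s1) => //; right.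
apply: (influence_trans s2).
have := influence_stay a l.+1 (k + M.+1 - l.+1) hy; rewrite subnKC //; lia.
Qed.

(* The
   backward influence sets of the two agents, taken over the last t windows,
   either meet or together gain at least one agent per window. *)
Section Scrambling.
Variables (N : nat) (a : nat -> nat -> nat -> R) (M k0 : nat).
Hypothesis window_qsc : forall k, quasi_strongly_connected N (union_edge a id k M).

Let T := N.-1.
Let horizon := (k0 + T * M.+1)%N.
Let start t := (k0 + (T - t) * M.+1)%N.

Definition sources j t : {set 'I_N} :=
  [set c : 'I_N | `[< influence N a (start t) c horizon j >]].

Lemma start_horizon t : (t <= T)%N -> (start t + t * M.+1)%N = horizon.
Proof. by move=> ht; rewrite /start /horizon -addnA -mulnDl subnK. Qed.

Lemma start_step t : (t < T)%N -> (start t.+1 + M.+1)%N = start t.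
Proof.
move=> ht; rewrite /start -addnA; congr (_ + _)%N.
by rewrite -{2}(mul1n M.+1) -mulnDl addn1 subnSK.
Qed.

Lemma sources_self j (hj : (j < N)%N) t : (t <= T)%N -> Ordinal hj \in sources j t.
Proof.
move=> ht; rewrite inE; apply/asboolP => /=.
by rewrite -(start_horizon ht); apply: influence_stay.
Qed.

Lemma sources_nbhd j t : (t < T)%N ->
  nbhd (union_edge a id (start t.+1) M) (sources j t) \subset sources j t.+1.
Proof.
move=> ht; apply/subsetP => x; rewrite !inE => /asboolP [y [hy hxy]].
move: hy; rewrite inE => /asboolP hy; apply/asboolP; apply: influence_trans hy.
rewrite -(start_step ht); case: hxy => [->|hE]; first exact: influence_stay.
exact: window_influence.
Qed.

Lemma sources_meet_or_grow i i' : (i < N)%N -> (i' < N)%N -> forall t, (t <= T)%N ->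
  (sources i t :&: sources i' t != set0) \/ (t.+2 <= #|sources i t :|: sources i' t|)%N.
Proof.
move=> hi hi'; elim=> [_|t IH ht].
  case: (eqVneq i i') => [<-|ne].
    by left; apply/set0Pn; exists (Ordinal hi); rewrite inE !sources_self.
  right; have h2 : [set Ordinal hi; Ordinal hi'] \subset sources i 0 :|: sources i' 0.
    apply/subsetP => x; rewrite in_set2 => /orP [] /eqP ->;
    by rewrite in_setU sources_self ?orbT.
  have hne : Ordinal hi != Ordinal hi' by apply: contraNneq ne => /(congr1 val) /= ->.
  by have := subset_leq_card h2; rewrite cards2 hne.
set E := union_edge a id (start t.+1) M.
have grow j : sources j t \subset sources j t.+1.
  exact: subset_trans (nbhd_sub _ _) (sources_nbhd j ht).
have [hdisj|hd] := eqVneq (sources i t :&: sources i' t) set0; last first.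
  by left; apply: meet_mono (grow i) (grow i') hd.
have [hdisjN|hndN] := eqVneq (nbhd E (sources i t) :&: nbhd E (sources i' t)) set0; last first.
  by left; apply: meet_mono hndN; apply: sources_nbhd.
right; case: (IH (ltnW ht)) => [|hcard]; first by rewrite hdisj eqxx.
have ne j (hj : (j < N)%N) : sources j t != set0.
  by apply/set0Pn; exists (Ordinal hj); exact: sources_self (ltnW ht).
have hgrow := nbhd_grow (window_qsc (start t.+1)) (ne i hi) (ne i' hi') hdisj hdisjN.
have hsub : nbhd E (sources i t) :|: nbhd E (sources i' t) \subset
            sources i t.+1 :|: sources i' t.+1 by apply: setUSS; apply: sources_nbhd.
apply: leq_trans (subset_leq_card hsub); apply: leq_trans hgrow; by rewrite ltnS.
Qed.

(* At most N agents exist, so after T windows the source sets must meet. *)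
Lemma scramble i i' : (i < N)%N -> (i' < N)%N ->
  exists c, influence N a k0 c horizon i /\ influence N a k0 c horizon i'.
Proof.
move=> hi hi'; have hN : N = T.+1 by rewrite /T prednK // (leq_ltn_trans (leq0n i) hi).
case: (sources_meet_or_grow hi hi' (leqnn T)) => [|hcard].
  case/set0Pn => c; rewrite !inE => /andP [/asboolP h1 /asboolP h2].
  by exists c; move: h1 h2; rewrite /start subnn mul0n addn0.
have := leq_trans hcard (max_card _); rewrite card_ord hN ltnn.
by [].
Qed.

End Scrambling.

Definition rcvg (u : nat -> R) (l : R) :=
  forall eps, 0 < eps -> exists K, forall k, (K <= k)%N -> `|u k - l| < eps.

Lemma rcvg_Un_cv u l : rcvg u l -> Un_cv u l.
Proof.
move=> h eps /RltP he; have [K HK] := h eps he; exists K => n /ssrnat.leP hn.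
by apply/RltP; rewrite RdistE; apply: HK.
Qed.

Lemma Un_cv_rcvg u l : Un_cv u l -> rcvg u l.
Proof.
move=> h eps he; have he' : Rgt eps 0 by apply/RltP.
have [K HK] := h eps he'; exists K => n hn.
by have := HK n (ssrnat.leP hn); rewrite RdistE => /RltP.
Qed.

Lemma nonincreasing_cvg (g : nat -> R) lb : (forall k, g k.+1 <= g k) ->
  (forall k, lb <= g k) -> exists l, rcvg g l.
Proof.
move=> hd hl.
have hD : Un_decreasing g by move=> n; apply/RleP; apply: hd.
have hB : has_lb g.
  by exists (- lb) => x [i ->]; apply/RleP; rewrite /opp_seq RoppE lerN2.
have [l hl'] := decreasing_cv g hD hB; exists l; exact: Un_cv_rcvg.
Qed.

Lemma nondecreasing_cvg (g : nat -> R) ub : (forall k, g k <= g k.+1) ->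
  (forall k, g k <= ub) -> exists l, rcvg g l /\ forall k, g k <= l.
Proof.
move=> hd hl.
have hD : Un_growing g by move=> n; apply/RleP; apply: hd.
have hB : has_ub g by exists ub => x [i ->]; apply/RleP; apply: hl.
have [l hl'] := growing_cv g hD hB; split with l; split; first exact: Un_cv_rcvg.
by move=> k; apply/RleP; apply: growing_ineq.
Qed.

Fixpoint fmax (f : nat -> R) n := if n is n'.+1 then Num.max (fmax f n') (f n') else f 0%N.

Definition fmin (f : nat -> R) n := - fmax (fun j => - f j) n.

Lemma fmax_ub f n j : (j < n)%N -> f j <= fmax f n.
Proof.
elim: n => // n IH; rewrite ltnS leq_eqVlt => /orP [/eqP ->|hj] /=.
  by rewrite le_max lexx orbT.
by rewrite le_max IH.
Qed.

Lemma fmax_attained f n : (0 < n)%N -> exists2 j, (j < n)%N & fmax f n = f j.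
Proof.
elim: n => // n IH _; case: n IH => [|n] IH; first by exists 0%N => //=; rewrite maxxx.
have [j hj ej] := IH erefl.
rewrite /= -/(fmax f n.+1) maxEle; case: ifP => _; first by exists n.+1.
by exists j => //; apply: ltnW.
Qed.

Lemma fmin_lb f n j : (j < n)%N -> fmin f n <= f j.
Proof. by move=> hj; rewrite /fmin lerNl; apply: (fmax_ub (fun j => - f j)). Qed.

Lemma fmin_attained f n : (0 < n)%N -> exists2 j, (j < n)%N & fmin f n = f j.
Proof.
move=> hn; have [j hj ej] := fmax_attained (fun j => - f j) hn.
by exists j => //; rewrite /fmin ej opprK.
Qed.

(* Consensus under perturbations with summable size: the spread max - min of the
   states contracts by the factor 1 - dl^L over every L = (N - 1)(M + 1) steps up
   to the accumulated error, hence vanishes; the maximum minus the accumulated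
   error is nonincreasing and bounded, hence converges. *)
Section Consensus.
Variables (N : nat) (a : nat -> nat -> nat -> R) (dl : R) (M : nat).
Variables (xi : nat -> nat -> R) (dd : nat -> R) (B : R).
Hypothesis N_gt0 : (0 < N)%N.
Hypothesis a_ge0 : forall k i j, 0 <= a k i j.
Hypothesis a_bounded : weights_bounded N a dl.
Hypothesis window_qsc : forall k, quasi_strongly_connected N (union_edge a id k M).
Hypothesis xi_step : perturbed_avg N a xi dd.
Hypothesis dd_ge0 : forall k, 0 <= dd k.
Hypothesis dd_summable : forall n, psum dd n <= B.

Let L := (N.-1 * M.+1)%N.
Let S := psum dd.
Let top k := fmax (fun j => xi j k) N.
Let bot k := fmin (fun j => xi j k) N.

Lemma top_ub k j : (j < N)%N -> xi j k <= top k.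
Proof. exact: (fmax_ub (fun j => xi j k)). Qed.

Lemma bot_lb k j : (j < N)%N -> bot k <= xi j k.
Proof. exact: (fmin_lb (fun j => xi j k)). Qed.

Lemma top_attained k : exists2 j, (j < N)%N & top k = xi j k.
Proof. exact: fmax_attained. Qed.

Lemma bot_attained k : exists2 j, (j < N)%N & bot k = xi j k.
Proof. exact: fmin_attained. Qed.

Lemma spread_ge0 k : 0 <= top k - bot k.
Proof. by have := top_ub k N_gt0; have := bot_lb k N_gt0; lra. Qed.

Lemma top_step k : top k.+1 <= top k + dd k.
Proof.
have [j hj ->] := top_attained k.+1.
by have := bounds_up a_ge0 xi_step (top_ub k) 1 hj; rewrite addn1 psumS; lra.
Qed.

Lemma spread_after k d :
  top (k + d)%N - bot (k + d)%N <= top k - bot k + 2 * (S (k + d)%N - S k).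
Proof.
have [j1 hj1 ->] := top_attained (k + d)%N.
have [j2 hj2 ->] := bot_attained (k + d)%N.
have := bounds_up a_ge0 xi_step (top_ub k) d hj1.
have := bounds_lo a_ge0 xi_step (bot_lb k) d hj2.
rewrite -/S; lra.
Qed.

(* Over L steps any two agents share a common influencer, so the spread shrinks. *)
Lemma spread_contract k :
  top (k + L)%N - bot (k + L)%N <= (1 - dl ^+ L) * (top k - bot k) + 2 * (S (k + L)%N - S k).
Proof.
have [i hi ->] := top_attained (k + L)%N.
have [i' hi' ->] := bot_attained (k + L)%N.
have [c [h1 h2]] := scramble k window_qsc hi hi'.
have := influence_bound a_ge0 a_bounded xi_step (top_ub k) h1.
have := influence_bound_lo a_ge0 a_bounded xi_step (bot_lb k) h2.
rewrite addKn -/L -/S; set p := dl ^+ L.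
have : p * (top k - xi c k) + p * (xi c k - bot k) = p * (top k - bot k) by ring.
lra.
Qed.

Let rho := 1 - dl ^+ L.

Lemma rho_ge0 : 0 <= rho.
Proof. by case: a_bounded => dl0 dl1 _ _; rewrite subr_ge0 exprn_ile1 // ltW. Qed.

Lemma rho_le1 : rho <= 1.
Proof. by case: a_bounded => dl0 _ _ _; have := exprn_gt0 L dl0; rewrite /rho; lra. Qed.

Lemma rho_lt1 : rho < 1.
Proof. by case: a_bounded => dl0 _ _ _; have := exprn_gt0 L dl0; rewrite /rho; lra. Qed.

Lemma spread_iter K n : top (K + n * L)%N - bot (K + n * L)%N <=
  rho ^+ n * (top K - bot K) + 2 * (S (K + n * L)%N - S K).
Proof.
elim: n => [|n IH]; first by rewrite mul0n addn0 expr0 mul1r subrr mulr0 addr0.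
have -> : (K + n.+1 * L = K + n * L + L)%N by rewrite mulSn; lia.
apply: (le_trans (spread_contract _)).
have hSm : 0 <= S (K + n * L)%N - S K by have := psum_mono K (n * L) dd_ge0; rewrite -/S; lra.
have hr0 := rho_ge0.
have : rho * (top (K + n * L)%N - bot (K + n * L)%N) <=
       rho * (rho ^+ n * (top K - bot K) + 2 * (S (K + n * L)%N - S K)).
  by apply: ler_wpM2l.
have : rho * (2 * (S (K + n * L)%N - S K)) <= 2 * (S (K + n * L)%N - S K).
  by apply: ler_piMl; [lra | exact: rho_le1].
rewrite exprS -mulrA -/rho; lra.
Qed.

Lemma psum_cvg : exists lS, rcvg S lS /\ forall k, S k <= lS.
Proof.
by apply: (nondecreasing_cvg (ub := B)) => // k; rewrite /S psumS; have := dd_ge0 k; lra.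
Qed.

Lemma spread_vanishes eps : 0 < eps ->
  exists K, forall k, (K <= k)%N -> top k - bot k < eps.
Proof.
move=> he; have [L0|Lpos] := posnP L.
  exists 0%N => k _; have := spread_contract k.
  by rewrite L0 expr0 subrr mul0r add0r addn0 subrr mulr0; lra.
have [lS [hScv hSle]] := psum_cvg.
have [K HK] := hScv _ (divr_gt0 he (ltr0n _ 4)).
have [J HJ] := geometric_small rho_ge0 rho_lt1 (spread_ge0 K) (divr_gt0 he (ltr0n _ 2)).
exists (K + J * L)%N => k hk.
have hKk : (K <= k)%N by apply: leq_trans hk; apply: leq_addr.
set n := ((k - K) %/ L)%N; set r := ((k - K) %% L)%N.
have ek : k = ((K + n * L) + r)%N by rewrite -addnA /n /r -divn_eq subnKC.
have hn : (J <= n)%N.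
  by rewrite /n -(mulnK J Lpos); apply: leq_div2r; rewrite leq_subRL.
have h1 := spread_after (K + n * L)%N r; rewrite -ek in h1.
have h2 := spread_iter K n; have h3 := HJ n hn.
have := HK K (leqnn K) => /ltr_normlP [h4 _]; have := hSle k; lra.
Qed.

Lemma top_compensated_cvg : exists l, rcvg (fun k => top k - S k) l.
Proof.
apply: (nonincreasing_cvg (lb := bot 0%N - B - B)) => k /=.
  by rewrite /S psumS; have := top_step k; lra.
have := bounds_lo a_ge0 xi_step (bot_lb 0) k N_gt0; rewrite add0n.
have := top_ub k N_gt0; have := dd_summable k.
have : psum dd 0 = 0 by rewrite /psum big_ord0.
rewrite -/S; lra.
Qed.

Theorem consensus : exists Lim, forall i, (i < N)%N -> rcvg (fun k => xi i k) Lim.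
Proof.
have [lS [hScv _]] := psum_cvg; have [lg hg] := top_compensated_cvg.
exists (lg + lS) => i hi eps he.
have he3 : 0 < eps / 3 by rewrite divr_gt0.
have [K1 HK1] := hg _ he3; have [K2 HK2] := hScv _ he3.
have [K3 HK3] := spread_vanishes he3.
exists (maxn K1 (maxn K2 K3)) => k; rewrite !geq_max => /and3P [hk1 hk2 hk3].
have := HK1 k hk1 => /ltr_normlP [a1 a2]; have := HK2 k hk2 => /ltr_normlP [b1 b2].
have := HK3 k hk3; have := top_ub k hi; have := bot_lb k hi.
by move=> d1 d2 c1; apply/ltr_normlP; split; lra.
Qed.

End Consensus.

Lemma eqbE (a b : nat) : Nat.eqb a b = (a == b).
Proof. by case: (PeanoNat.Nat.eqb_spec a b) => [->|h]; [rewrite eqxx | apply/esym/eqP]. Qed.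

Lemma dotE m f v : dot m f v = \sum_(p < m) f p * v p.
Proof. exact: rsumE. Qed.

Lemma dotB m f v w : dot m f (fun p => v p - w p) = dot m f v - dot m f w.
Proof. by rewrite !dotE -sumrB; apply: eq_bigr => p _; ring. Qed.

Lemma mvE m M v p : mv m M v p = \sum_(q < m) M p q * v q.
Proof. exact: rsumE. Qed.

Lemma mv_Aint m' v p : (p < m'.+1)%N -> mv m'.+1 Aint v p = if (p < m')%N then v p.+1 else 0.
Proof.
move=> hp; rewrite mvE; case: ifP => hpm.
  have hp1 : (p.+1 < m'.+1)%N by [].
  rewrite (bigD1 (Ordinal hp1)) //= /Aint eqbE eqxx mul1r big1 ?addr0 //.
  move=> q hq; rewrite /Aint eqbE; case: eqP => [e|]; last by rewrite mul0r.
  have eq : q = Ordinal hp1 by apply: val_inj.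
  by rewrite eq eqxx in hq.
rewrite big1 // => q _; rewrite /Aint eqbE; case: eqP => [e|]; last by rewrite mul0r.
by have := ltn_ord q; rewrite e ltnS hpm.
Qed.

Lemma K5E m' b p : K5 m'.+1 b p = if p == m' then 1 else b p.+1.
Proof. by rewrite /K5 /= PeanoNat.Nat.sub_0_r eqbE. Qed.

(* The weighted sum sum_{p >= 1} b_p v_p, so that K4 . v = K5 . v - bshift v. *)
Definition bshift m' (b : nat -> R) (v : nat -> R) :=
  \sum_(p < m'.+1) (if (p : nat) == 0%N then 0 else b p) * v p.

Lemma bshiftB m' b v w : bshift m' b (fun p => v p - w p) = bshift m' b v - bshift m' b w.
Proof. by rewrite /bshift -sumrB; apply: eq_bigr => p _; ring. Qed.

Lemma K4_dot m' b v : dot m'.+1 (K4 m'.+1 b) v = dot m'.+1 (K5 m'.+1 b) v - bshift m' b v.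
Proof. by rewrite !dotE /bshift -sumrB; apply: eq_bigr => p _; rewrite /K4 eqbE; to_ring; ring. Qed.

Lemma K5_Aint m' b v : dot m'.+1 (K5 m'.+1 b) (mv m'.+1 Aint v) = bshift m' b v.
Proof.
rewrite dotE big_ord_recr /= mv_Aint // ltnn mulr0 addr0 /bshift big_ord_recl /= mul0r add0r.
apply: eq_bigr => p _; rewrite mv_Aint /=; last by apply: (leq_trans (ltn_ord p)).
by rewrite ltn_ord K5E (ltn_eqF (ltn_ord p)) /bump /= add1n.
Qed.

Lemma K5_Bint m' b : dot m'.+1 (K5 m'.+1 b) (Bint m'.+1) = 1.
Proof.
rewrite dotE big_ord_recr /= big1 ?add0r.
  by rewrite /Bint /= PeanoNat.Nat.sub_0_r eqbE eqxx K5E eqxx mul1r.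
move=> p _; rewrite /Bint /= PeanoNat.Nat.sub_0_r eqbE (ltn_eqF (ltn_ord p)).
by rewrite mulr0.
Qed.

Lemma integrator_shift m' (xx : nat -> nat -> R) (uu : nat -> R) :
  (forall k p, (p < m'.+1)%N -> xx k.+1 p = mv m'.+1 Aint (xx k) p + Bint m'.+1 p * uu k) ->
  forall p k, (p < m'.+1)%N -> xx k p = xx (k + p)%N 0%N.
Proof.
move=> hx; elim=> [|p IH] k hp; first by rewrite addn0.
have hp1 : (p < m'.+1)%N by apply: ltnW.
have hp2 : (p < m')%N by rewrite -ltnS.
have := hx k p hp1; rewrite mv_Aint // hp2 /Bint /= PeanoNat.Nat.sub_0_r eqbE.
by rewrite (ltn_eqF hp2) mul0r addr0 => <-; rewrite IH // addSnnS.
Qed.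

Definition bpolyC m' (b : nat -> R) : {poly C} :=
  \poly_(j < m'.+1) (if j == m' then 1 else ((b j.+1)%:C)%C).

Lemma size_bpolyC m' b : size (bpolyC m' b) = m'.+1.
Proof. by rewrite size_poly_eq // eqxx oner_eq0. Qed.

Lemma bpolyC_horner m' b s : toC (bpoly m'.+1 b s) = (bpolyC m' b).[toC s].
Proof.
rewrite /bpoly /= PeanoNat.Nat.sub_0_r toC_add toC_pow toC_sum horner_poly.
rewrite big_ord_recr /= eqxx mul1r addrC; congr (_ + _).
by apply: eq_bigr => j _; rewrite (ltn_eqF (ltn_ord j)) toC_mul toC_pow.
Qed.

Lemma pfilter_bpolyC m' b (y : nat -> C) k :
  pfilter (bpolyC m' b) y k = \sum_(p < m'.+1) ((K5 m'.+1 b p)%:C)%C * y (k + p)%N.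
Proof.
rewrite /pfilter size_bpolyC; apply: eq_bigr => p _.
by rewrite coef_poly ltn_ord K5E; case: eqP.
Qed.

Lemma term_le_sum n (f : nat -> R) i : (forall j, 0 <= f j) -> (i < n)%N ->
  f i <= \sum_(j < n) f j.
Proof.
move=> h hi; rewrite (bigD1 (Ordinal hi)) //= lerDl; apply: sumr_ge0 => j _; exact: h.
Qed.

Lemma dot_bound m f v Kf : (forall p, (p < m)%N -> `|f p| <= Kf) ->
  `|dot m f v| <= Kf * \sum_(p < m) `|v p|.
Proof.
move=> hf; rewrite dotE mulr_sumr; apply: (le_trans (ler_norm_sum _ _ _)).
by apply: ler_sum => p _; rewrite normrM; apply: ler_wpM2r => //; apply: hf.
Qed.

Lemma normalized_sum_bound N (al t : nat -> R) T : (forall j, 0 <= al j) -> 0 <= T ->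
  (forall j, (j < N)%N -> `|t j| <= T) ->
  `|(1 + \sum_(j < N) al j)^-1 * \sum_(j < N) (al j * t j)| <= T.
Proof.
move=> ha hT ht; have s0 : 0 <= \sum_(j < N) al j by apply: sumr_ge0.
have h1 : `|\sum_(j < N) (al j * t j)| <= (\sum_(j < N) al j) * T.
  rewrite mulr_suml; apply: (le_trans (ler_norm_sum _ _ _)); apply: ler_sum => j _.
  by rewrite normrM ger0_norm //; apply: ler_wpM2l => //; apply: ht.
rewrite normrM ger0_norm ?invr_ge0; last lra.
rewrite mulrC ler_pdivrMr; lra.
Qed.

Lemma common_pos_bound (n : nat) (P : nat -> R -> Prop) :
  (forall t c c', 0 < c' -> c' <= c -> P t c -> P t c') ->
  (forall t, (t < n)%N -> exists c, 0 < c /\ P t c) ->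
  exists c, 0 < c /\ forall t, (t < n)%N -> P t c.
Proof.
move=> hm; elim: n => [|n IH] h; first by exists 1; split => //; lra.
have [c1 [c10 hc1]] := IH (fun t ht => h t (ltnW ht)).
have [c2 [c20 hc2]] := h n (ltnSn n).
have hc : 0 < Num.min c1 c2 by rewrite lt_min c10 c20.
exists (Num.min c1 c2); split => // t; rewrite ltnS leq_eqVlt => /orP [/eqP ->|ht].
  by apply: (hm _ c2) => //; rewrite ge_min lexx orbT.
by apply: (hm _ c1) => //; [rewrite ge_min lexx | apply: hc1].
Qed.

Lemma bounded_partial_sums n (f : nat -> nat -> R) :
  (forall t, (t < n)%N -> exists B, forall K, \sum_(k < K) f t k <= B) ->
  exists B, forall K, \sum_(k < K) \sum_(t < n) f t k <= B.
Proof.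
elim: n => [|n IH] h.
  by exists 0 => K; rewrite big1 // => k _; rewrite big_ord0.
have [B1 hB1] := IH (fun t ht => h t (ltnW ht)).
have [B2 hB2] := h n (ltnSn n).
exists (B1 + B2) => K.
under eq_bigr do rewrite big_ord_recr.
by rewrite big_split /=; apply: lerD; [apply: hB1 | apply: hB2].
Qed.

Section ClosedLoop.
Variables (N m' nS : nat) (Cout K6 b : nat -> R).
Variables (alpha : nat -> nat -> nat -> R) (sigma : nat -> nat).
Variables (x z : nat -> nat -> nat -> R) (u : nat -> nat -> R).

Let m := m'.+1.
Let a k := alpha (sigma k).
Let Aobs p q := Aint p q + K6 p * Cout q.

Hypothesis N_gt0 : (0 < N)%N.
Hypothesis sigma_lt : forall k, (sigma k < nS)%N.
Hypothesis alpha_ge0 : forall q i j, 0 <= alpha q i j.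
Hypothesis graphs_ujqsc : UJQSC N alpha sigma.
Hypothesis observer_stable : forall lam, is_eigenvalue m Aobs lam -> Cmod lam < 1.
Hypothesis bpoly_stable : forall s, bpoly m b s = C0 -> Cmod s < 1.
Hypothesis control : forall i k, (i < N)%N ->
  u i k = dot m (K4 m b) (z i k) - (1 + rsum N (fun j => a k i j))^-1 *
    rsum N (fun j => a k i j * dot m (K5 m b) (fun p => z i k p - z j k p)).
Hypothesis plant : forall i k p, (i < N)%N -> (p < m)%N ->
  x i k.+1 p = mv m Aint (x i k) p + Bint m p * u i k.
Hypothesis observer : forall i k p, (i < N)%N -> (p < m)%N ->
  z i k.+1 p = mv m Aobs (z i k) p + Bint m p * u i k - K6 p * dot m Cout (x i k).

Let e i k p := z i k p - x i k p.
Let etot k := \sum_(j < N) \sum_(p < m) `|e j k p|.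
Let xi i k := dot m (K5 m b) (x i k).
Let gain := \sum_(p < m) (`|K4 m b p| + `|K5 m b p|).

Lemma error_dynamics i k p : (i < N)%N -> (p < m)%N ->
  e i k.+1 p = rsum m (fun q => Aobs p q * e i k q).
Proof.
move=> hi hp; rewrite /e observer // plant // rsumE !mvE dotE /Aobs; to_ring.
have -> : \sum_(q < m) (Aint p q + K6 p * Cout q) * (z i k q - x i k q) =
    \sum_(q < m) Rplus (Aint p q) (Rmult (K6 p) (Cout q)) * z i k q
    - \sum_(q < m) Aint p q * x i k q - K6 p * \sum_(q < m) Cout q * x i k q.
  by rewrite mulr_sumr -!sumrB; apply: eq_bigr => q _; to_ring; ring.
ring.
Qed.

Lemma error_summable : exists BE, forall K, \sum_(k < K) etot k <= BE.
Proof.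
apply: (@bounded_partial_sums _ (fun j k => \sum_(p < m) `|e j k p|)) => j hj.
apply: (@bounded_partial_sums _ (fun p k => `|e j k p|)) => p hp.
apply: (stable_recurrence_summable observer_stable) => // k q hq.
exact: error_dynamics.
Qed.

Lemma gain_ge0 : 0 <= gain.
Proof. by apply: sumr_ge0 => p _; apply: addr_ge0. Qed.

Lemma gain_bound p : (p < m)%N -> `|K4 m b p| <= gain /\ `|K5 m b p| <= gain.
Proof.
move=> hp; have := @term_le_sum m (fun p => `|K4 m b p| + `|K5 m b p|) p.
move=> /(_ (fun j => addr_ge0 (normr_ge0 _) (normr_ge0 _)) hp) /=; rewrite -/gain.
by have := normr_ge0 (K4 m b p); have := normr_ge0 (K5 m b p); split; lra.
Qed.

Lemma xi_deviation i k : (i < N)%N ->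
  let E5 j := dot m (K5 m b) (e j k) in
  xi i k.+1 - wavg N a xi k i = dot m (K4 m b) (e i k) -
    (1 + wsum N a k i)^-1 * \sum_(j < N) a k i j * (E5 i - E5 j).
Proof.
move=> hi E5; have s0 : 0 <= wsum N a k i by apply: sumr_ge0 => j _; apply: alpha_ge0.
have hxi : xi i k.+1 = bshift m' b (x i k) + u i k.
  rewrite /xi -K5_Aint -[u i k]mul1r -(K5_Bint m' b) !dotE mulr_suml -big_split /=.
  by apply: eq_bigr => p _; rewrite plant //; to_ring; ring.
have hZ j : dot m (K5 m b) (z j k) = xi j k + E5 j by rewrite /E5 /e dotB /xi; ring.
have hsum : \sum_(j < N) a k i j * dot m (K5 m b) (fun p => z i k p - z j k p) =
    wsum N a k i * xi i k - \sum_(j < N) a k i j * xi j k +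
    \sum_(j < N) a k i j * (E5 i - E5 j).
  rewrite /wsum mulr_suml -sumrB -big_split /=; apply: eq_bigr => j _.
  by rewrite dotB !hZ; ring.
rewrite hxi control // !rsumE -/(wsum N a k i) hsum K4_dot hZ /wavg.
rewrite [dot _ _ (e i k)]K4_dot -/(E5 i) /e bshiftB; field; lra.
Qed.

Lemma xi_perturbed : perturbed_avg N a xi (fun k => 3 * gain * etot k).
Proof.
move=> k i hi; rewrite xi_deviation //=.
set E5 := fun j => dot m (K5 m b) (e j k).
have etot_ge j : (j < N)%N -> \sum_(p < m) `|e j k p| <= etot k.
  by apply: (@term_le_sum N (fun j => \sum_(p < m) `|e j k p|)) => t; apply: sumr_ge0.
have etot0 : 0 <= etot k by apply: sumr_ge0 => j _; apply: sumr_ge0.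
have hK4 : `|dot m (K4 m b) (e i k)| <= gain * etot k.
  apply: le_trans (dot_bound _ (fun p hp => proj1 (gain_bound hp))) _.
  by apply: ler_wpM2l; [apply: gain_ge0 | apply: etot_ge].
have hE5 j : (j < N)%N -> `|E5 j| <= gain * etot k.
  move=> hj; apply: le_trans (dot_bound _ (fun p hp => proj2 (gain_bound hp))) _.
  by apply: ler_wpM2l; [apply: gain_ge0 | apply: etot_ge].
have hmix : `|(1 + wsum N a k i)^-1 * \sum_(j < N) a k i j * (E5 i - E5 j)| <=
            2 * (gain * etot k).
  apply: (@normalized_sum_bound N (a k i) (fun j => E5 i - E5 j)).
  - by move=> j; apply: alpha_ge0.
  - by rewrite !mulr_ge0 // gain_ge0.
  - move=> j hj; apply: le_trans (ler_normB _ _) _.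
    by have := hE5 i hi; have := hE5 j hj; lra.
by apply: le_trans (ler_normB _ _) _; lra.
Qed.

Lemma positive_weight_lb : exists c, 0 < c /\ forall q, (q < nS)%N ->
  forall i, (i < N)%N -> forall j, (j < N)%N -> 0 < alpha q i j -> c <= alpha q i j.
Proof.
apply: common_pos_bound.
  by move=> t c c' h0 h1 h2 i hi j hj hp; apply: le_trans h1 (h2 i hi j hj hp).
move=> q hq; apply: common_pos_bound.
  by move=> t c c' h0 h1 h2 j hj hp; apply: le_trans h1 (h2 j hj hp).
move=> i hi; apply: common_pos_bound.
  by move=> t c c' h0 h1 h2 hp; apply: le_trans h1 (h2 hp).
move=> j hj; case: (boolP (0 < alpha q i j)) => hp; first by exists (alpha q i j).
by exists 1; split => // h; move: hp; rewrite h.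
Qed.

Lemma weights_lower_bound : exists dl, weights_bounded N a dl.
Proof.
have [amin [amin0 hamin]] := positive_weight_lb.
pose Amax := \sum_(q < nS) \sum_(i < N) \sum_(j < N) alpha q i j.
have row_ge0 q i : 0 <= \sum_(j < N) alpha q i j by apply: sumr_ge0 => j _.
have Amax0 : 0 <= Amax by apply: sumr_ge0 => q _; apply: sumr_ge0 => i _.
have wsum_le k i : (i < N)%N -> wsum N a k i <= Amax.
  move=> hi; apply: le_trans (@term_le_sum N (fun i => \sum_(j < N) a k i j) i _ hi) _.
    by move=> i'; apply: row_ge0.
  apply: (@term_le_sum nS (fun q => \sum_(i < N) \sum_(j < N) alpha q i j)).
    by move=> q; apply: sumr_ge0 => i' _.
  exact: sigma_lt.
pose mm := Num.min 1 amin.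
have mm0 : 0 < mm by rewrite lt_min ltr01 amin0.
have mm1 : mm <= 1 by rewrite ge_min lexx.
have mma : mm <= amin by rewrite ge_min lexx orbT.
have hdl k i : (i < N)%N -> mm / (1 + Amax) * (1 + wsum N a k i) <= mm.
  move=> hi; rewrite mulrAC ler_pdivrMr; last lra.
  by apply: ler_wpM2l; [exact: ltW | have := wsum_le k i hi; lra].
exists (mm / (1 + Amax)); split.
- by rewrite divr_gt0 //; lra.
- by rewrite ler_pdivrMr; lra.
- by move=> k i hi; apply: le_trans (hdl k i hi) mm1.
- move=> k i j hi hj hp; apply: le_trans (hdl k i hi) _.
  by apply: le_trans mma _; apply: hamin.
Qed.

Lemma xi_consensus : exists Lim, forall i, (i < N)%N -> rcvg (xi i) Lim.
Proof.
have [BE hBE] := error_summable; have [dl hdl] := weights_lower_bound.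
have [M [_ hM]] := graphs_ujqsc.
have dd_ge0 k : 0 <= 3 * gain * etot k.
  by rewrite !mulr_ge0 ?gain_ge0 //; apply: sumr_ge0 => j _; apply: sumr_ge0.
apply: (consensus (M := M) (B := 3 * gain * BE) N_gt0 _ hdl hM xi_perturbed dd_ge0).
  by move=> k i j; apply: alpha_ge0.
move=> n; rewrite /psum -mulr_sumr; apply: ler_wpM2l; last exact: hBE.
by rewrite mulr_ge0 ?gain_ge0.
Qed.

(* Since xi_i k = sum_p K5_p x_i(k + p) 0, the stable filter bpoly can be undone:
   every coordinate of every state converges to the same limit. *)
Theorem closed_loop_consensus : exists xstar : R,
  forall i p, (i < N)%N -> (p < m)%N -> rcvg (fun k => x i k p) xstar.
Proof.
have [Lim hLim] := xi_consensus.
pose c := ((Lim%:C)%C / (bpolyC m' b).[1]).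
exists (complex.Re c) => i p hi hp.
have hsh := integrator_shift (fun k q hq => plant k hi hq).
pose y k := ((x i k 0%N)%:C)%C.
have hxi k : pfilter (bpolyC m' b) y k = ((xi i k)%:C)%C.
  rewrite pfilter_bpolyC /xi dotE rmorph_sum; apply: eq_bigr => q _.
  by rewrite rmorphM /= (hsh q k (ltn_ord q)).
have hfilt : ccvg (pfilter (bpolyC m' b) y) ((Lim%:C)%C).
  move=> eps he; have [K HK] := hLim i hi eps he; exists K => k hk.
  by rewrite hxi -rmorphB cabs_real; apply: HK.
have hroot w : root (bpolyC m' b) w -> cabs w < 1.
  move=> hw; have : bpoly m b (fromC w) = C0.
    by apply: toC_inj; rewrite bpolyC_horner toCK; apply/eqP.
  by move/bpoly_stable; rewrite Cmod_cabs toCK.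
have hy := pfilter_cvg (size_bpolyC m' b) hroot hfilt.
move=> eps he; have [K HK] := hy eps he; exists K => k hk.
rewrite (hsh p k hp); apply: le_lt_trans (HK (k + p)%N _); last first.
  exact: leq_trans hk (leq_addr _ _).
by apply: le_trans (cabs_Re _); rewrite Re_realB.
Qed.

End ClosedLoop.

Local Close Scope ring_scope.

Theorem theorem3
  (N m : nat) (HN : (1 <= N)%coq_nat) (Hm : (2 <= m)%coq_nat)
  (Cout : nat -> R) (K6 : nat -> R) (b : nat -> R)
  (nS : nat) (alpha : nat -> nat -> nat -> R) (sigma : nat -> nat)
  (Hsigma : forall k, (sigma k < nS)%coq_nat)
  (Halpha_nonneg : forall q i j, 0 <= alpha q i j)
  (Halpha_noself : forall q i, alpha q i i = 0)
  (Hconn : UJQSC N alpha sigma)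
  (Hobs : forall lam, is_eigenvalue m (fun p q => Aint p q + K6 p * Cout q) lam ->
          Cmod lam < 1)
  (Hroots : forall s, bpoly m b s = C0 -> Cmod s < 1)
  (x z : nat -> nat -> nat -> R) (u : nat -> nat -> R)
  (Hu : forall i k, (i < N)%coq_nat ->
     u i k = dot m (K4 m b) (z i k)
       - / (1 + rsum N (fun j => alpha (sigma k) i j))
         * rsum N (fun j => alpha (sigma k) i j *
                     dot m (K5 m b) (fun p => z i k p - z j k p)))
  (Hx : forall i k p, (i < N)%coq_nat -> (p < m)%coq_nat ->
     x i (S k) p = mv m Aint (x i k) p + Bint m p * u i k)
  (Hz : forall i k p, (i < N)%coq_nat -> (p < m)%coq_nat ->
     z i (S k) p = mv m (fun p q => Aint p q + K6 p * Cout q) (z i k) p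
                   + Bint m p * u i k - K6 p * dot m Cout (x i k)) :
  exists xstar : nat -> R,
    forall i p, (i < N)%coq_nat -> (p < m)%coq_nat -> Un_cv (fun k => x i k p) (xstar p).
Proof.
case: m Hm Hobs Hroots Hu Hx Hz => [|m'] Hm Hobs Hroots Hu Hx Hz; first by lia.
have [xstar hx] := @closed_loop_consensus N m' nS Cout K6 b alpha sigma x z u
  (introT ssrnat.leP HN) (fun k => introT ssrnat.ltP (Hsigma k))
  (fun q i j => introT RleP (Halpha_nonneg q i j)) Hconn
  (fun lam h => introT RltP (Hobs lam h)) (fun s h => introT RltP (Hroots s h))
  (fun i k hi => Hu i k (elimT ssrnat.ltP hi))
  (fun i k p hi hp => Hx i k p (elimT ssrnat.ltP hi) (elimT ssrnat.ltP hp))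
  (fun i k p hi hp => Hz i k p (elimT ssrnat.ltP hi) (elimT ssrnat.ltP hp)).
exists (fun _ => xstar) => i p /ssrnat.ltP hi /ssrnat.ltP hp.
exact: rcvg_Un_cv (hx i p hi hp).
Qed.
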